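(* Let $X$ be a topological quandle. (1) If $X$ has the discrete topology, then $\bar H^n_Q(X)=0$ and $\bar H^n_W(X)=\bar C^n_W(X)$ for $n\ge1$ and $W=R,D$, and $\bar H^0_Q(X)=\bar H^0_R(X)=\bar C^0_R(X)$. (2) If $X$ has the indiscrete topology, then $\bar H^n_W(X)\cong H^{n+1}_W(X)$ for $n\ge0$ and $W=R,D,Q$. (3) If the underlying quandle structure of $X$ is trivial ($x\triangleright y=x$ for all $x,y$), then $\bar H^n_W(X)=\bar C^n_W(X)$ for $W=R,D,Q$.
   Context: A quandle is a set with a binary operation $\triangleright$ such that $x\triangleright x=x$, each $\beta_y(x)=x\triangleright y$ is bijective, and $(x\triangleright y)\triangleright z=(x\triangleright z)\triangleright(y\triangleright z)$. A topological quandle is a topological space with a continuous quandle operation such that every $\beta_y$ is a homeomorphism. For a topological quandle $X$, $\bar C^R_n(X)$ is the free abelian group on singular $n$-simplices $\sigma:\Delta^n\to X$ modulo identifying two simplices with the same ordered vertex tuple; thus it is free abelian on the tuples $\sigma_{[x_1,\dots,x_{n+1}]}$ ($x_i=\sigma(e_{i-1})$) that are vertex tuples of some singular $n$-simplex. Its boundary is $\partial_n\sigma_{[x_1,\dots,x_{n+1}]}=\sum_{i=2}^{n+1}(-1)^i\big(\sigma_{[x_1,\dots,\hat{x_i},\dots,x_{n+1}]}-\sigma_{[x_1\triangleright x_i,\dots,x_{i-1}\triangleright x_i,x_{i+1},\dots,x_{n+1}]}\big)$. For $n\ge1$, $\bar C^D_n(X)$ is generated by $\sigma_{[x_1,\dots,x_{n+1}]}$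 with $x_i=x_{i+1}$ for some $i\in\{1,\dots,n\}$, and $\bar C^D_0(X)=0$; $\bar C^Q_n(X)=\bar C^R_n(X)/\bar C^D_n(X)$. The cochain groups are $\bar C^n_W(X)=\mathrm{Hom}(\bar C^W_n(X),\mathbb{Z})$ with $\delta^n f=f\circ\partial_{n+1}$, and $\bar H^n_W(X)$ is the resulting cohomology. The rack complex $C^R_n(X)$ is free abelian on $X^n$ with boundary $\partial^R_n(x_1,\dots,x_n)=\sum_{i=2}^n(-1)^i[(x_1,\dots,\hat{x_i},\dots,x_n)-(x_1\triangleright x_i,\dots,x_{i-1}\triangleright x_i,x_{i+1},\dots,x_n)]$; $C^D_n(X)$ is generated by tuples with $x_i=x_{i+1}$ for some $i\in\{1,\dots,n-1\}$; $C^Q_n=C^R_n/C^D_n$; $H^n_W(X)$ is the cohomology of $\mathrm{Hom}(C^W_*(X),\mathbb{Z})$. *)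

From HB Require Import structures.
From mathcomp Require Import all_boot all_order all_algebra.
From mathcomp Require Import all_classical all_reals all_analysis.
From mathcomp Require Import Rstruct Rstruct_topology.

Set Implicit Arguments.
Unset Strict Implicit.
Unset Printing Implicit Defensive.

Import Order.TTheory GRing.Theory Num.Theory.
Local Open Scope classical_set_scope.
Local Open Scope ring_scope.

Definition is_quandle (X : Type) (op : X -> X -> X) : Prop :=
  [/\ (forall x, op x x = x),
      (forall y, bijective (fun x => op x y)) &
      (forall x y z, op (op x y) z = op (op x z) (op y z))].

Definition is_top_quandle (X : topologicalType) (op : X -> X -> X) : Prop :=
  [/\ is_quandle op,
      continuous (fun p : X * X => op p.1 p.2) &
      (forall y, exists g : X -> X,
          [/\ cancel (fun x => op x y) g, cancel g (fun x => op x y),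
              continuous (fun x => op x y) & continuous g])].

Definition std_simplex (n : nat) : set 'rV[Rdefinitions.R]_n.+1 :=
  [set t | (forall i, 0 <= t ord0 i) /\ \sum_i t ord0 i = 1].

Definition std_vertex (n : nat) (i : 'I_n.+1) : 'rV[Rdefinitions.R]_n.+1 := delta_mx ord0 i.

Definition vertex_tuple (X : topologicalType) (n : nat) (s : seq X) : Prop :=
  exists sigma : 'rV[Rdefinitions.R]_n.+1 -> X,
    {within @std_simplex n, continuous sigma} /\
    s = [seq sigma (std_vertex i) | i <- enum 'I_n.+1].

Definition degenerate (X : Type) (s : seq X) : Prop :=
  exists (a b : seq X) (x : X), s = a ++ x :: x :: b.

(* For a cochain f (a function on tuples, extended by zero outside the basis),
   (f o boundary)(x_1,...,x_m) =
   sum_{i=2}^{m} (-1)^i [ f(x_1,..,^x_i,..,x_m)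
                         - f(x_1|>x_i,..,x_{i-1}|>x_i,x_{i+1},..,x_m) ].
   Here j = i - 1 is the 0-based position of x_i. *)
Definition bd_term (X : Type) (op : X -> X -> X) (f : seq X -> int)
    (s : seq X) (j : nat) : int :=
  if drop j s is y :: post then
    (-1) ^+ j.+1 * (f (take j s ++ post) - f (map (fun x => op x y) (take j s) ++ post))
  else 0.

Definition cobd (X : Type) (op : X -> X -> X) (f : seq X -> int) (s : seq X) : int :=
  \sum_(1 <= j < size s) bd_term op f s j.

(** * Cochain complexes Hom(C_*, Z) of complexes free on a basis of tuples.
    [basis n] is the set of basis tuples of the chain group in degree n.
    A cochain of degree n is a Z-valued function on the basis, represented as
    a function on all tuples vanishing outside the basis.  The coboundary of a
    degree-n cochain f is f o boundary_{n+1}, evaluated on the basis of degree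
    n+1.  Degree -1 is the zero group. *)

Section Complex.
Variables (X : Type) (op : X -> X -> X) (basis : nat -> seq X -> Prop).

Definition cochain (n : nat) (f : seq X -> int) : Prop :=
  forall s, ~ basis n s -> f s = 0.

Definition cocycle (n : nat) (f : seq X -> int) : Prop :=
  cochain n f /\ forall s, basis n.+1 s -> cobd op f s = 0.

Definition coboundary (n : nat) (g : seq X -> int) : Prop :=
  cochain n g /\
  (if n is m.+1 then
     exists h, cochain m h /\ forall s, basis n s -> g s = cobd op h s
   else forall s, g s = 0).

Definition cohom_trivial (n : nat) : Prop :=
  forall f, cocycle n f -> coboundary n f.

Definition cohom_eq_cochains (n : nat) : Prop :=
  (forall f, cochain n f -> cocycle n f) /\
  (forall g, coboundary n g -> forall s, g s = 0).
End Complex.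

(* An isomorphism of abelian groups Z1/B1 ~= Z2/B2 (subquotients of groups of
   functions), presented by a lift phi : Z1 -> Z2 on representatives which is
   additive modulo B2, reflects/preserves B, and is onto modulo B2. *)
Definition subquot_iso (T : Type)
    (Z1 B1 Z2 B2 : (T -> int) -> Prop) : Prop :=
  exists phi : (T -> int) -> (T -> int),
    [/\ (forall z, Z1 z -> Z2 (phi z)),
        (forall z1 z2, Z1 z1 -> Z1 z2 ->
            B2 (fun t => phi (fun u => z1 u + z2 u) t - phi z1 t - phi z2 t)),
        (forall z, Z1 z -> (B2 (phi z) <-> B1 z)) &
        (forall w, Z2 w -> exists2 z, Z1 z & B2 (fun t => w t - phi z t))].

Inductive cpx := WR | WD | WQ.

Definition W_cond (X : Type) (W : cpx) (s : seq X) : Prop :=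
  match W with WR => True | WD => degenerate s | WQ => ~ degenerate s end.

(* basis of \bar C^W_n(X): vertex tuples of singular n-simplices
   (restricted to degenerate ones for D, to non-degenerate ones for Q) *)
Definition bar_basis (X : topologicalType) (W : cpx) (n : nat) (s : seq X) : Prop :=
  vertex_tuple n s /\ W_cond W s.

(* basis of C^W_n(X): n-tuples *)
Definition rack_basis (X : Type) (W : cpx) (n : nat) (s : seq X) : Prop :=
  size s = n /\ W_cond W s.

From HB Require Import structures.
From mathcomp Require Import all_boot all_order all_algebra.
From mathcomp Require Import all_classical all_reals all_analysis.
From mathcomp Require Import Rstruct Rstruct_topology.

(* In the discrete topology a singular simplex is constant, since the image of
   the connected simplex is a connected, hence one-point, set; so every basis
   tuple is (x, ..., x).  The boundary vanishes on such tuples by idempotency,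
   and in degree >= 1 they are all degenerate, so the normalized complex is 0.
   In the indiscrete topology every map into X is continuous, so the vertex
   tuples of n-simplices are exactly the (n+1)-tuples and the complexes agree
   up to a shift of degree; in degree 0 both coboundary groups vanish because
   the boundary of a 1-tuple is 0.  For a trivial quandle the two faces in each
   term of the boundary coincide. *)

Set Implicit Arguments.
Unset Strict Implicit.
Unset Printing Implicit Defensive.
Import Order.TTheory GRing.Theory Num.Theory.
Local Open Scope classical_set_scope.
Local Open Scope ring_scope.

Section Coboundary.
Variables (X : Type) (op : X -> X -> X).

Lemma cobd_zero (s : seq X) : cobd op (fun _ => 0) s = 0.
Proof.
rewrite /cobd big1 // => j _; rewrite /bd_term.
by case: (drop j s) => // *; rewrite subrr mulr0.
Qed.

Lemma cobd_eq0 (f : seq X -> int) (s : seq X) :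
  (forall j y post, drop j s = y :: post -> map (op^~ y) (take j s) = take j s) ->
  cobd op f s = 0.
Proof.
move=> fixed; rewrite /cobd big1 // => j _; rewrite /bd_term.
by case E: (drop j s) => [|y post] //; rewrite (fixed _ _ _ E) subrr mulr0.
Qed.

Lemma cobd_size_le1 (f : seq X -> int) (s : seq X) :
  (size s <= 1)%N -> cobd op f s = 0.
Proof. by move=> s_le1; rewrite /cobd big_geq. Qed.

Lemma cobd_trivial_op (f : seq X -> int) (s : seq X) :
  (forall x y, op x y = x) -> cobd op f s = 0.
Proof.
by move=> opE; apply: cobd_eq0 => j y post _; rewrite (eq_map (opE^~ y)) map_id.
Qed.

Lemma cobd_nseq (f : seq X -> int) m (x : X) :
  (forall x, op x x = x) -> cobd op f (nseq m x) = 0.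
Proof.
move=> idem; apply: cobd_eq0 => j y post.
rewrite drop_nseq; case jm: (m - j)%N => //= [k] [<- _].
rewrite take_nseq; last by rewrite ltnW // -subn_gt0 jm.
by elim: j {jm} => //= i ->; rewrite idem.
Qed.

End Coboundary.

Section Cohomology.
Variables (X : Type) (op : X -> X -> X) (basis : nat -> seq X -> Prop).

Lemma coboundary0 n (g : seq X -> int) :
  (forall s, g s = 0) -> coboundary op basis n g.
Proof.
move=> g0; split=> [s _|]; first exact: g0.
by case: n => // m; exists (fun _ => 0); split=> // s _; rewrite g0 cobd_zero.
Qed.

Lemma cohom_eq_cochains_of_cobd0 n :
  (forall m s f, basis m.+1 s -> cobd op f s = 0) -> cohom_eq_cochains op basis n.
Proof.
move=> cobd0; split=> [f cf|g [cg]]; first by split=> // s /cobd0->.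
case: n cg => [//|m] cg [h [_ gE]] s.
by have [/[dup] /gE -> /cobd0 ->|/cg] := pselect (basis m.+1 s).
Qed.

Lemma cohom_trivial_of_basis0 n :
  (forall s, ~ basis n s) -> cohom_trivial op basis n.
Proof. by move=> nob f [cf _]; apply: coboundary0 => s; apply/cf/nob. Qed.

End Cohomology.

Section ShiftedBasis.
Variables (X : Type) (op : X -> X -> X) (basis basis' : nat -> seq X -> Prop).
Hypothesis basis_shift : forall n s, basis n s <-> basis' n.+1 s.

Lemma cochain_shift n (f : seq X -> int) :
  cochain basis n f <-> cochain basis' n.+1 f.
Proof. by split=> cf s nb; apply: cf => /basis_shift. Qed.

Lemma cocycle_shift n (f : seq X -> int) :
  cocycle op basis n f <-> cocycle op basis' n.+1 f.
Proof.
rewrite /cocycle cochain_shift.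
by split=> -[cf cobd0]; split=> // s /basis_shift; apply: cobd0.
Qed.

Hypothesis basis'1_short : forall s, basis' 1 s -> (size s <= 1)%N.

Lemma coboundary_shift n (g : seq X -> int) :
  coboundary op basis n g <-> coboundary op basis' n.+1 g.
Proof.
rewrite /coboundary cochain_shift; case: n => [|m]; split=> -[cg gE]; split=> //.
- by exists (fun _ => 0); split=> // s _; rewrite gE cobd_zero.
- case: gE => h [_ gE] s.
  have [/[dup] /gE -> /basis'1_short /cobd_size_le1 //|/cg //] := pselect (basis' 1 s).
- case: gE => h [ch gE]; exists h.
  by split; [exact/cochain_shift | move=> s /basis_shift; apply: gE].
- case: gE => h [ch gE]; exists h.
  by split; [exact/cochain_shift | move=> s /basis_shift; apply: gE].
Qed.

End ShiftedBasis.

Lemma subquot_iso_of_eq (T : Type) (Z1 B1 Z2 B2 : (T -> int) -> Prop) :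
  (forall z, Z1 z <-> Z2 z) -> (forall z, B1 z <-> B2 z) -> B2 (fun _ => 0) ->
  subquot_iso Z1 B1 Z2 B2.
Proof.
move=> ZE BE B0; exists id; split=> [z /ZE //|z1 z2 _ _|z _|w /ZE Zw].
- rewrite (_ : (fun t => _) = fun _ => 0) // funeqE => t /=.
  by rewrite addrAC addrK subrr.
- by rewrite BE.
- exists w => //; rewrite (_ : (fun t => _) = fun _ => 0) // funeqE => t.
  exact: subrr.
Qed.

Lemma std_vertexE n (i j : 'I_n.+1) : std_vertex i ord0 j = (i == j)%:R.
Proof. by rewrite /std_vertex mxE eqxx eq_sym. Qed.

Lemma std_vertex_simplex n (i : 'I_n.+1) : std_simplex (std_vertex i).
Proof.
split=> [j|]; first by rewrite std_vertexE ler0n.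
under eq_bigr do rewrite std_vertexE.
by rewrite (bigD1 i) //= eqxx big1 ?addr0 // => j; rewrite eq_sym => /negbTE ->.
Qed.

Lemma std_simplex_convex n (u v : 'rV[Rdefinitions.R]_n.+1) t :
  std_simplex u -> std_simplex v -> 0 <= t <= 1 ->
  std_simplex ((1 - t) *: u + t *: v).
Proof.
move=> [u0 u1] [v0 v1] /andP[t0 t1]; split=> [j|].
  by rewrite !mxE addr_ge0 // mulr_ge0 // subr_ge0.
under eq_bigr do rewrite !mxE.
by rewrite big_split /= -!mulr_sumr u1 v1 !mulr1 subrK.
Qed.

Lemma vertex_tuple_size (X : topologicalType) n (s : seq X) :
  vertex_tuple n s -> size s = n.+1.
Proof. by case=> sigma [_ ->]; rewrite size_map size_enum_ord. Qed.

Lemma connected_discrete_sub1 (T : topologicalType) (A : set T) (x : T) :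
  (forall B : set T, open B) -> connected A -> A x -> A `<=` [set x].
Proof.
move=> disc cA Ax; suff <- : A `&` [set x] = A by move=> y [].
apply: cA; first by exists x.
- by exists [set x].
- by exists [set x] => //; rewrite -[[set x]]setCK; apply/open_closedC.
Qed.

Lemma simplex_map_discrete_vertexE (X : topologicalType) n
    (sigma : 'rV[Rdefinitions.R]_n.+1 -> X) (i j : 'I_n.+1) :
  (forall A : set X, open A) -> {within @std_simplex n, continuous sigma} ->
  sigma (std_vertex i) = sigma (std_vertex j).
Proof.
move=> disc cs.
pose p t := std_vertex j + t *: (std_vertex i - std_vertex j).
have pE t : p t = (1 - t) *: std_vertex j + t *: std_vertex i.
  by rewrite /p scalerBl scale1r scalerBr addrA addrAC.
have p_cont : continuous p.
  by move=> t; apply: cvgD; [exact: cvg_cst | exact: scalel_continuous].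
have p_simplex : p @` `[0, 1] `<=` @std_simplex n.
  move=> _ [t /= t01 <-]; rewrite pE; apply: std_simplex_convex => //;
    by [exact: std_vertex_simplex | rewrite in_itv in t01].
have cK : connected (sigma @` (p @` `[0, 1])).
  apply: connected_continuous_connected; last exact: continuous_subspaceW cs.
  exact/connected_continuous_connected/continuous_subspaceT/p_cont/segment_connected.
have endpoint t : t = 0 \/ t = 1 -> (sigma @` (p @` `[0, 1])) (sigma (p t)).
  move=> t01; exists (p t) => //; exists t => //=.
  by rewrite in_itv /=; case: t01 => ->; rewrite lexx ler01.
have := connected_discrete_sub1 disc cK (endpoint 0 (or_introl erefl)).
move/(_ _ (endpoint 1 (or_intror erefl))).
by rewrite /p scale0r scale1r addr0 addrC subrK; apply.
Qed.

Lemma vertex_tuple_discrete (X : topologicalType) n (s : seq X) :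
  (forall A : set X, open A) -> vertex_tuple n s -> exists x, s = nseq n.+1 x.
Proof.
move=> disc [sigma [cs ->]]; exists (sigma (std_vertex ord0)).
rewrite (eq_map (fun i => simplex_map_discrete_vertexE i ord0 disc cs)).
by rewrite -[in RHS](size_enum_ord n.+1); elim: (enum _) => //= ? ? ->.
Qed.

Lemma indiscrete_continuous (T X : topologicalType) (f : T -> X) :
  (forall A : set X, open A -> A = set0 \/ A = setT) -> continuous f.
Proof.
move=> indisc; apply/continuousP => A /indisc [->|->].
- by rewrite preimage_set0; exact: open0.
- by rewrite preimage_setT; exact: openT.
Qed.

Lemma vertex_tuple_indiscrete (X : topologicalType) n (s : seq X) :
  (forall A : set X, open A -> A = set0 \/ A = setT) ->
  vertex_tuple n s <-> size s = n.+1.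
Proof.
move=> indisc; split; first exact: vertex_tuple_size.
case: s => [//|x0 s'] s_size; set s := x0 :: s'.
pose sigma (t : 'rV[Rdefinitions.R]_n.+1) :=
  nth x0 s (find (fun i => t ord0 i == 1) (enum 'I_n.+1)).
exists sigma; split; first exact/continuous_subspaceT/indiscrete_continuous.
have sigma_vertex i : sigma (std_vertex i) = nth x0 s i.
  rewrite /sigma (eq_find (a2 := pred1 i)); first by congr nth; exact: index_enum_ord.
  by move=> j /=; rewrite std_vertexE pnatr_eq1 [j == i]eq_sym; case: (i == j).
rewrite (eq_map sigma_vertex) (map_comp (nth x0 s) val) val_enum_ord.
by rewrite -s_size -/(mkseq _ _) mkseq_nth.
Qed.

Lemma nseq_degenerate (X : Type) k (x : X) : degenerate (nseq k.+2 x).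
Proof. by exists [::], (nseq k x), x. Qed.

Lemma degenerate_size (X : Type) (s : seq X) : degenerate s -> (2 <= size s)%N.
Proof. by case=> a [b [x ->]]; rewrite size_cat /= !addnS. Qed.

Section BarBasis.
Variable X : topologicalType.

Lemma bar_basisQ0E (s : seq X) : bar_basis WQ 0 s <-> bar_basis WR 0 s.
Proof.
split=> -[vs _]; split=> //= /degenerate_size.
by rewrite (vertex_tuple_size vs).
Qed.

Hypothesis X_discrete : forall A : set X, open A.

Lemma bar_basisQ_discrete n (s : seq X) : ~ bar_basis WQ n.+1 s.
Proof.
by case=> /(vertex_tuple_discrete X_discrete) [x ->]; apply; exact: nseq_degenerate.
Qed.

Lemma cohom_eq_cochains_discrete (op : X -> X -> X) W n :
  (forall x, op x x = x) -> cohom_eq_cochains op (bar_basis W) n.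
Proof.
move=> idem; apply: cohom_eq_cochains_of_cobd0 => m s f [].
by case/(vertex_tuple_discrete X_discrete) => x -> _; exact: cobd_nseq.
Qed.

End BarBasis.

Lemma bar_basis_indiscrete (X : topologicalType) W n (s : seq X) :
  (forall A : set X, open A -> A = set0 \/ A = setT) ->
  bar_basis W n s <-> rack_basis W n.+1 s.
Proof.
by move=> indisc; rewrite /bar_basis /rack_basis (vertex_tuple_indiscrete _ _ indisc).
Qed.

Unset Implicit Arguments.
Set Strict Implicit.

Theorem mainTheorem11 (X : topologicalType) (op : X -> X -> X)
    (hX : is_top_quandle op) :
  (* (1) discrete topology *)
  ((forall A : set X, open A) ->
     (forall n : nat, (1 <= n)%N ->
        [/\ cohom_trivial op (bar_basis WQ) n,
            cohom_eq_cochains op (bar_basis WR) n &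
            cohom_eq_cochains op (bar_basis WD) n]) /\
     [/\ cohom_eq_cochains op (bar_basis WQ) 0,
         cohom_eq_cochains op (bar_basis WR) 0 &
         (forall f : seq X -> int, cochain (bar_basis WQ) 0 f <-> cochain (bar_basis WR) 0 f)]) /\
  (* (2) indiscrete topology *)
  ((forall A : set X, open A -> A = set0 \/ A = setT) ->
     forall (n : nat) (W : cpx),
       subquot_iso (cocycle op (bar_basis W) n) (coboundary op (bar_basis W) n)
                   (cocycle op (rack_basis W) n.+1)
                   (coboundary op (rack_basis W) n.+1)) /\
  (* (3) trivial quandle *)
  ((forall x y : X, op x y = x) ->
     forall (n : nat) (W : cpx), cohom_eq_cochains op (bar_basis W) n).
Proof.
have [[idem _ _] _ _] := hX.
split; [move=> disc | split].
- have eqC W n := cohom_eq_cochains_discrete disc W n idem.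
  split=> [[//|n] _|]; split; try exact: eqC.
    exact/cohom_trivial_of_basis0/bar_basisQ_discrete.
  by move=> f; split=> cf s nb; apply: cf => /bar_basisQ0E.
- move=> indisc n W; have shift m s := bar_basis_indiscrete W m s indisc.
  apply: subquot_iso_of_eq; first exact: cocycle_shift.
    by apply: coboundary_shift => // s [-> _].
  exact: coboundary0.
- move=> opE n W; apply: cohom_eq_cochains_of_cobd0 => m s f _.
  exact: cobd_trivial_op.
Qed.
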